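(* Let $\mathcal{R}$ be a commutative ring with unity, $P$ a locally finite poset and $b$ an additive biderivation of $I(P,\mathcal{R})$. Let $x\le y$ and $u\le v$ in $P$. If at least one pair of elements among $\{x,y,u,v\}$ is not comparable, then $b(r_1e_{xy},r_2e_{uv})=0$ for all $r_1,r_2\in\mathcal{R}$.
   Context: $I(P,\mathcal{R})$ is the incidence algebra: functions $f:P\times P\to\mathcal{R}$ with $f(x,y)=0$ unless $x\le y$, with product $(fg)(x,y)=\sum_{x\le z\le y}f(x,z)g(z,y)$; $e_{xy}$ ($x\le y$) is the function equal to $1$ at $(x,y)$ and $0$ elsewhere. An additive biderivation is a map $b$ of two arguments, additive in each, with $b(\alpha\beta,\gamma)=\alpha b(\beta,\gamma)+b(\alpha,\gamma)\beta$ and $b(\alpha,\beta\gamma)=\beta b(\alpha,\gamma)+b(\alpha,\beta)\gamma$. *)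

From HB Require Import structures.
From mathcomp Require Import all_boot all_order all_algebra.
Set Implicit Arguments. Unset Strict Implicit. Unset Printing Implicit Defensive.
Import Order.TTheory GRing.Theory.

Record locfin (d : Order.disp_t) (P : porderType d) := LocFin {
  lf_itv : P -> P -> seq P;
  lf_uniq : forall x y, uniq (lf_itv x y);
  lf_mem : forall x y z, (z \in lf_itv x y) = (x <= z <= y)%O }.

Record incidence (d : Order.disp_t) (P : porderType d) (R : comPzRingType) :=
  Incidence {
    ifun :> P -> P -> R;
    ifunP : forall x y, ~~ (x <= y)%O -> ifun x y = 0%R }.

Section Ops.
Variables (d : Order.disp_t) (P : porderType d) (R : comPzRingType).
Variable L : locfin P.
Local Open Scope ring_scope.

Lemma iadd_subproof (f g : incidence P R) x y :
  ~~ (x <= y)%O -> f x y + g x y = 0.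
Proof. by move=> h; rewrite !ifunP // addr0. Qed.

Definition iadd (f g : incidence P R) : incidence P R :=
  Incidence (@iadd_subproof f g).

Lemma imul_subproof (f g : incidence P R) x y :
  ~~ (x <= y)%O -> \sum_(z <- lf_itv L x y) f x z * g z y = 0.
Proof.
move=> h; rewrite big_seq big1 // => z; rewrite lf_mem => /andP[h1 h2].
by case/negP: h; exact: (le_trans h1 h2).
Qed.

Definition imul (f g : incidence P R) : incidence P R :=
  Incidence (@imul_subproof f g).

Lemma ie_subproof (r : R) (x y : P) a c :
  ~~ (a <= c)%O -> (if [&& a == x, c == y & (x <= y)%O] then r else 0) = 0.
Proof.
move=> h; case: ifP => // /and3P[/eqP ax /eqP cy xy].
by move: h; rewrite ax cy xy.
Qed.

(* ie r x y = r e_{xy} when x <= y (the value r at (x,y), 0 elsewhere) *)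
Definition ie (r : R) (x y : P) : incidence P R :=
  Incidence (@ie_subproof r x y).

End Ops.

Arguments imul {d P R} L f g.
Arguments iadd {d P R} f g.
Arguments ie {d P R} r x y.

Section Bider.
Variables (d : Order.disp_t) (P : porderType d) (R : comPzRingType).
Variable L : locfin P.
Definition is_biderivation (b : incidence P R -> incidence P R -> incidence P R) :=
  [/\ (forall f g h, b (iadd f g) h = iadd (b f h) (b g h)),
      (forall f g h, b f (iadd g h) = iadd (b f g) (b f h)),
      (forall a be c, b (imul L a be) c = iadd (imul L a (b be c)) (imul L (b a c) be)) &
      (forall a be c, b a (imul L be c) = iadd (imul L be (b a c)) (imul L (b a be) c))].

End Bider.

(* Factor r e_xy = e_xx (r e_xy) = (r e_xy) e_yy.  For any derivation D of
   I(P,R), the Leibniz rule applied to these factorisations shows that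
   D(r e_pq)(a,c) can only be nonzero when a <= p and q <= c.  Both partial
   maps of a biderivation are derivations; expanding b(r1 e_xy, r2 e_uv)
   through e_xx (resp. e_yy) leaves entries of b(_, r2 e_uv) in row x and
   column x (resp. row y and column y), which vanish as soon as x (resp. y)
   is neither below u nor above v.  Each incomparability among x, y, u, v
   forces one of these two situations. *)
From HB Require Import structures.
From mathcomp Require Import all_boot all_order all_algebra.
From Stdlib Require Import FunctionalExtensionality ProofIrrelevance.
Import Order.TTheory GRing.Theory.
Set Implicit Arguments. Unset Strict Implicit.
Local Open Scope ring_scope.

Section IncidenceAlgebra.
Variables (R : comPzRingType) (d : Order.disp_t) (P : porderType d).
Variable L : locfin P.

Lemma incidence_ext (f g : incidence P R) : (forall a c, f a c = g a c) -> f = g.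
Proof.
case: f g => f fP [g gP] /= fgE.
have eq_fg : f = g by do 2 (apply: functional_extensionality => ?).
by subst g; congr Incidence; apply: proof_irrelevance.
Qed.

Lemma iaddE (f g : incidence P R) a c : iadd f g a c = f a c + g a c.
Proof. by []. Qed.

Lemma imul_ieL (r : R) p q (h : incidence P R) a c :
  imul L (ie r p q) h a c = if (a == p) && (p <= q)%O then r * h q c else 0.
Proof.
rewrite /=; have [/andP[/eqP-> pq]|npq] := boolP ((a == p) && (p <= q)%O); last first.
  rewrite big1 // => z _; case: ifP => [/and3P[ap _ pq]|_]; last by rewrite mul0r.
  by rewrite ap pq in npq.
have [qI|qNI] := boolP (q \in lf_itv L p c).
  rewrite (bigD1_seq q) ?lf_uniq //= !eqxx pq big1 ?addr0 // => z /negbTE zq.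
  by rewrite zq andbF mul0r.
rewrite big1_seq => [|z /= zI]; last first.
  by case: ifP => [/and3P[_ /eqP zq _]|_]; [rewrite -zq zI in qNI | rewrite mul0r].
by rewrite ifunP ?mulr0 //; apply: contra qNI => qc; rewrite lf_mem pq.
Qed.

Lemma imul_ieR (r : R) p q (h : incidence P R) a c :
  imul L h (ie r p q) a c = if (c == q) && (p <= q)%O then h a p * r else 0.
Proof.
rewrite /=; have [/andP[/eqP-> pq]|_] := boolP ((c == q) && (p <= q)%O); last first.
  by rewrite big1 // => z _; rewrite andbF mulr0.
have [pI|pNI] := boolP (p \in lf_itv L a q).
  rewrite (bigD1_seq p) ?lf_uniq //= eqxx big1 ?addr0 // => z /negbTE zp.
  by rewrite zp mulr0.
rewrite big1_seq => [|z /= zI]; last first.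
  by have [zp|] := eqVneq z p; [rewrite -zp zI in pNI | rewrite /= mulr0].
by rewrite ifunP ?mul0r //; apply: contra pNI => ap; rewrite lf_mem ap.
Qed.

Lemma imul_ie1l (r : R) p q :
  (p <= q)%O -> imul L (ie 1 p p) (ie r p q) = ie r p q.
Proof.
move=> pq; apply: incidence_ext => a c; rewrite imul_ieL lexx andbT /=.
by case: (eqVneq a p) => [_|]; rewrite ?mul1r ?eqxx.
Qed.

Lemma imul_ie1r (r : R) p q :
  (p <= q)%O -> imul L (ie r p q) (ie 1 q q) = ie r p q.
Proof.
move=> pq; apply: incidence_ext => a c; rewrite imul_ieR lexx andbT /=.
by case: (eqVneq c q) => [_|]; rewrite ?mulr1 ?eqxx ?andbF.
Qed.

Definition is_derivation (D : incidence P R -> incidence P R) :=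
  forall f g, D (imul L f g) = iadd (imul L f (D g)) (imul L (D f) g).

Section Derivation.
Variable D : incidence P R -> incidence P R.
Hypothesis derD : is_derivation D.

Lemma derivation_ie_factorl (r : R) p q a c : (p <= q)%O ->
  D (ie r p q) a c = (if a == p then D (ie r p q) p c else 0)
                   + (if c == q then D (ie 1 p p) a p * r else 0).
Proof.
move=> pq; rewrite -{1}(imul_ie1l r pq) derD iaddE.
by rewrite imul_ieL imul_ieR lexx pq !andbT mul1r; case: eqP => // ->.
Qed.

Lemma derivation_ie_factorr (r : R) p q a c : (p <= q)%O ->
  D (ie r p q) a c = (if a == p then r * D (ie 1 q q) q c else 0)
                   + (if c == q then D (ie r p q) a q else 0).
Proof.
move=> pq; rewrite -{1}(imul_ie1r r pq) derD iaddE.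
by rewrite imul_ieL imul_ieR lexx pq !andbT mulr1; case: (c =P q) => // ->.
Qed.

Lemma derivation_ie_eq0_row (r : R) p q a c :
  (p <= q)%O -> ~~ (a <= p)%O -> D (ie r p q) a c = 0.
Proof.
move=> pq nap; have ap : a != p by apply: contraNneq nap => ->.
by rewrite derivation_ie_factorl // (negbTE ap) add0r ifunP ?mul0r ?if_same.
Qed.

Lemma derivation_ie_eq0_col (r : R) p q a c :
  (p <= q)%O -> ~~ (q <= c)%O -> D (ie r p q) a c = 0.
Proof.
move=> pq nqc; have cq : c != q by apply: contraNneq nqc => ->.
by rewrite derivation_ie_factorr // (negbTE cq) addr0 ifunP ?mulr0 ?if_same.
Qed.

End Derivation.

Section Biderivation.
Variable b : incidence P R -> incidence P R -> incidence P R.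
Hypothesis bb : is_biderivation L b.

Lemma biderivation_derivationl h : is_derivation (b^~ h).
Proof. by case: bb => _ _ + _ f g; apply. Qed.

Lemma biderivation_derivationr f : is_derivation (b f).
Proof. by case: bb => _ _ _ + g h; apply. Qed.

Variables (x y u v : P) (r1 r2 : R).
Hypotheses (xy : (x <= y)%O) (uv : (u <= v)%O).

Lemma biderivation_ie_eq0_src a c :
  ~~ (x <= u)%O -> ~~ (v <= x)%O -> b (ie r1 x y) (ie r2 u v) a c = 0.
Proof.
move=> nxu nvx; rewrite (derivation_ie_factorl (biderivation_derivationl _)) //.
rewrite (derivation_ie_eq0_row (biderivation_derivationr _)) //.
by rewrite (derivation_ie_eq0_col (biderivation_derivationr _)) // mul0r !if_same addr0.
Qed.

Lemma biderivation_ie_eq0_tgt a c :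
  ~~ (y <= u)%O -> ~~ (v <= y)%O -> b (ie r1 x y) (ie r2 u v) a c = 0.
Proof.
move=> nyu nvy; rewrite (derivation_ie_factorr (biderivation_derivationl _)) //.
rewrite (derivation_ie_eq0_row (biderivation_derivationr _)) //.
by rewrite (derivation_ie_eq0_col (biderivation_derivationr _)) // mulr0 !if_same addr0.
Qed.

End Biderivation.
End IncidenceAlgebra.

Theorem mainTheorem9 (R : comPzRingType) (d : Order.disp_t) (P : porderType d)
  (L : locfin P) (b : incidence P R -> incidence P R -> incidence P R)
  (x y u v : P) :
  is_biderivation L b ->
  (x <= y)%O -> (u <= v)%O ->
  [|| ~~ (x >=< y)%O, ~~ (x >=< u)%O, ~~ (x >=< v)%O,
      ~~ (y >=< u)%O, ~~ (y >=< v)%O | ~~ (u >=< v)%O] ->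
  forall r1 r2 : R, forall a c : P, b (ie r1 x y) (ie r2 u v) a c = 0%R.
Proof.
move=> bb xy uv incmp r1 r2 a c.
rewrite /Order.comparable xy uv /= ?orbF in incmp.
have src := biderivation_ie_eq0_src bb r1 r2 xy uv a c.
have tgt := biderivation_ie_eq0_tgt bb r1 r2 xy uv a c.
case/or4P: incmp => /norP[nle1 nle2].
- by apply: src => //; apply: contra nle2 => /(le_trans uv).
- by apply: src => //; apply: contra nle1 => /le_trans; apply.
- by apply: tgt => //; apply: contra nle2 => /(le_trans uv).
- by apply: tgt => //; apply: contra nle1 => /le_trans; apply.
Qed.
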